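(* Let $\mathbb{X}=\{0,1\}^{\mathbb{N}}$ with the metric $d$ and let $\mu$ be the measure on $\mathbb{X}$ defined below from a family $\mathcal{L}$ of cylinders and numbers $0<p_0\le p_1$ with $p_0+p_1=1$. Let $E=\{q=(q_1,q_2)\in\mathbb{R}^2: q_1+q_2\ge0\}$, and let $\chi:\mathbb{X}\times\left]0,1\right]\to(\mathbb{R}^2)'$ satisfy: for every $q=(q_1,q_2)\in\mathbb{R}^2$ and every $\lambda>0$ there is $r_0>0$ such that for all $x\in\mathbb{X}$ and $r<r_0$, $$r^{\lambda}\mu(B(x,r))^{q_1+q_2}\le e^{\langle q,\chi(x,r)\rangle}\le r^{-\lambda}\mu(B(x,r))^{q_1+q_2}.$$ Let $a>0$ and $\alpha\in(\mathbb{R}^2)'$ with $\langle q,\alpha\rangle=a(q_1+q_2)$. Then $$\left\{x\in\mathbb{X}:\limsup_{r\to0}\frac{\langle q,\chi(x,r)\rangle}{\log r}\le\langle q,\alpha\rangle\ \forall q\in E\right\}=\left\{x\in\mathbb{X}:\limsup_{r\to0}\frac{\log\mu(B(x,r))}{\log r}\le a\right\}.$$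
   Context: For $x=(x_i)_{i\ge0},y=(y_i)_{i\ge0}\in\mathbb{X}$, $d(x,y)=0$ if $x=y$ and $d(x,y)=2^{-n}$ if $x_n\ne y_n$ and $x_i=y_i$ for $0\le i<n$. For a finite word $j=j_0\dots j_{n-1}$ over $\{0,1\}$, the cylinder is $[j]=\{jx:x\in\mathbb{X}\}$. $\mathcal{L}$ is a family of cylinders (its elements are called selected cylinders). $\mu$ is the Borel probability measure with $\mu(\mathbb{X})=1$ and, for every cylinder $[j]$ and $l\in\{0,1\}$, $\mu([jl])=p_l\,\mu([j])$ if $[j]$ contains a selected cylinder, and $\mu([jl])=\mu([j])/2$ otherwise. *)

From HB Require Import structures.
From mathcomp Require Import all_boot all_order all_algebra.
From mathcomp Require Import all_classical all_reals all_analysis.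
Set Implicit Arguments. Unset Strict Implicit. Unset Printing Implicit Defensive.
Import Order.TTheory GRing.Theory Num.Theory.
Local Open Scope classical_set_scope.
Local Open Scope ring_scope.

(* The Cantor space X = {0,1}^N, with 0 = false, 1 = true. *)
Definition X := nat -> bool.

Definition dist (R : realType) (x y : X) : R :=
  match pselect (exists n, x n != y n) with
  | left H => (2%:R ^- (ex_minn H))%R
  | right _ => 0
  end.

Definition ball_d (R : realType) (x : X) (r : R) : set X :=
  [set y | dist R x y < r].

Definition catw (j : seq bool) (x : X) : X :=
  fun n => if (n < size j)%N then nth false j n else x (n - size j)%N.

Definition cyl (j : seq bool) : set X := [set catw j x | x in [set: X]].

Definition d_open (R : realType) : set (set X) :=
  [set A | forall x, A x -> exists2 r : R, 0 < r & ball_d x r `<=` A].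

Definition borelX (R : realType) := g_sigma_algebraType (d_open R).

(* [j] contains a selected cylinder, L being the family of selected cylinders
   (given by their words) *)
Definition contains_selected (L : set (seq bool)) (j : seq bool) : Prop :=
  exists2 k, L k & cyl k `<=` cyl j.

Definition is_mu (R : realType) (L : set (seq bool)) (p0 p1 : R)
  (mu : set (borelX R) -> \bar R) : Prop :=
  mu setT = 1%E /\
  forall (j : seq bool) (l : bool),
    mu (cyl (rcons j l)) =
      ((if pselect (contains_selected L j) then (if l then p1 else p0)
        else 2^-1)%:E * mu (cyl j))%E.

(* pairing <q, v> between R^2 and its dual (identified with R^2) *)
Definition pairing (R : realType) (q v : R * R) : R := q.1 * v.1 + q.2 * v.2.

Definition limsup0 (R : realType) (f : R -> R) : \bar R :=
  ereal_inf [set ereal_sup [set (f r)%:E | r in `]0, delta[ ] | delta in `]0, +oo[ ].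

From HB Require Import structures.
From mathcomp Require Import all_boot all_order all_algebra.
From mathcomp Require Import all_classical all_reals all_analysis.
From mathcomp Require Import lra.
Import Order.TTheory GRing.Theory Num.Theory.
Local Open Scope classical_set_scope.
Local Open Scope ring_scope.

(* Taking logarithms and dividing by [ln r < 0], the hypothesis on [chi] says
   that [<q, chi(x,r)> / ln r] and [(q1 + q2) ln mu(B(x,r)) / ln r] differ by
   at most any prescribed [lam] for small [r].  With [q = (1,0)] this bounds
   the local dimension of [mu] by the limsup for [chi]; conversely, for
   [q1 + q2 >= 0] multiplying the local-dimension bound by [q1 + q2] gives the
   bound for [chi]. *)

Section Limsup0.
Context {R : realType}.
Implicit Types (f g : R -> R) (c s : R).

Lemma limsup0_leP f c : (limsup0 f <= c%:E)%E <->
  forall e, 0 < e -> exists2 d, 0 < d & forall r, 0 < r -> r < d -> f r <= c + e.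
Proof.
split=> [fc e e0 | fce].
- have : (limsup0 f < (c + e)%:E)%E by apply: le_lt_trans fc _; rewrite lte_fin ltrDl.
  case/ereal_inf_lt => _ [d + <-]; rewrite /= in_itv /= andbT => d0 supd.
  exists d => // r r0 rd; rewrite -lee_fin; apply/ltW/(le_lt_trans _ supd).
  by apply: ereal_sup_ubound; exists r; rewrite //= in_itv /= r0 rd.
- apply/lee_addgt0Pr => e e0; have [d d0 fd] := fce e e0.
  apply: (@le_trans _ _ (ereal_sup [set (f r)%:E | r in `]0, d[])).
    by apply: ereal_inf_lbound; exists d; rewrite //= in_itv /= d0.
  apply: ge_ereal_sup => _ [r /= + <-]; rewrite in_itv /= => /andP[r0 rd].
  by rewrite -EFinD lee_fin fd.
Qed.

Lemma limsup0_le_approx f g c :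
  (forall e, 0 < e -> exists2 d, 0 < d & forall r, 0 < r -> r < d -> f r <= g r + e) ->
  (limsup0 g <= c%:E)%E -> (limsup0 f <= c%:E)%E.
Proof.
move=> fg /limsup0_leP gc; apply/limsup0_leP => e e0.
have e20 : 0 < e / 2 by rewrite divr_gt0.
have [d1 d10 fgd] := fg _ e20; have [d2 d20 gcd] := gc _ e20.
exists (Num.min d1 d2) => [|r r0]; first by rewrite lt_min d10 d20.
rewrite lt_min => /andP[rd1 rd2]; have := fgd r r0 rd1; have := gcd r r0 rd2; lra.
Qed.

Lemma limsup0_scale f c s : 0 <= s ->
  (limsup0 f <= c%:E)%E -> (limsup0 (fun r => s * f r)%R <= (s * c)%:E)%E.
Proof.
move=> s0 /limsup0_leP fc; apply/limsup0_leP => e e0.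
have s1 : 0 < s + 1 by lra.
have t0 : 0 < e / (s + 1) by rewrite divr_gt0.
have et : e = e / (s + 1) * (s + 1) by rewrite divfK ?lt0r_neq0.
have [d d0 fcd] := fc _ t0; exists d => // r r0 rd.
have := ler_wpM2l s0 (fcd r r0 rd); rewrite mulrDr; nra.
Qed.

Lemma ln_div_ln_sandwich (m s e lam r : R) : 0 < r < 1 ->
  powR r lam * powR m s <= expR e -> expR e <= powR r (- lam) * powR m s ->
  `|e / ln r - s * ln m / ln r| <= lam.
Proof.
move=> r01 lo hi; have lnr : ln r < 0 by apply: ln_lt0.
have ms0 : 0 < powR m s.
  rewrite lt_def powR_ge0 andbT; apply: contraTN hi => /eqP->.
  by rewrite mulr0 -ltNge expR_gt0.
have r0 : 0 < r by case/andP: r01.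
have lo0 : 0 < powR r lam * powR m s by rewrite mulr_gt0 // powR_gt0.
have hi0 : 0 < powR r (- lam) * powR m s by rewrite mulr_gt0 // powR_gt0.
have ln_lo : lam * ln r + s * ln m <= e.
  rewrite -(ln_powR m) -(ln_powR r) -lnM ?posrE ?ms0 ?powR_gt0 //.
  by rewrite -[e in _ <= e]expRK ler_ln ?posrE ?expR_gt0 ?lo0 //; exact: lo.
have ln_hi : e <= - lam * ln r + s * ln m.
  rewrite -(ln_powR m) -(ln_powR r) -lnM ?posrE ?ms0 ?powR_gt0 //.
  by rewrite -[e in e <= _]expRK ler_ln ?posrE ?expR_gt0 ?hi0 //; exact: hi.
have il : (ln r)^-1 < 0 by rewrite invr_lt0.
have lil : ln r * (ln r)^-1 = 1 by rewrite mulfV ?lt_eqF.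
by rewrite -mulrBl ler_norml; apply/andP; split; nra.
Qed.

End Limsup0.

Section ChiVersusMass.
Context {R : realType} {T : Type} {m : T -> R -> R} {chi : T -> R -> R * R}.

Hypothesis chi_sandwich : forall (q : R * R) (lam : R), 0 < lam ->
  exists2 r0 : R, 0 < r0 &
    forall (x : T) (r : R), 0 < r -> r <= 1 -> r < r0 ->
      powR r lam * powR (m x r) (q.1 + q.2) <= expR (pairing q (chi x r))
      /\ expR (pairing q (chi x r)) <= powR r (- lam) * powR (m x r) (q.1 + q.2).

Lemma pairing_chi_ln_close (q : R * R) (x : T) (lam : R) : 0 < lam ->
  exists2 d : R, 0 < d & forall r, 0 < r -> r < d ->
    `|pairing q (chi x r) / ln r - (q.1 + q.2) * (ln (m x r) / ln r)| <= lam.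
Proof.
move=> lam0; have [d d0 chi_d] := chi_sandwich q lam lam0.
exists (Num.min d 1) => [|r r0]; first by rewrite lt_min d0 ltr01.
rewrite lt_min => /andP[rd r1]; have [lo hi] := chi_d x r r0 (ltW r1) rd.
by rewrite mulrA; apply: ln_div_ln_sandwich lo hi; rewrite r0.
Qed.

Lemma local_dim_le_of_chi (x : T) (c : R) :
  (limsup0 (fun r => (pairing (1, 0) (chi x r) / ln r)%R) <= c%:E)%E ->
  (limsup0 (fun r => (ln (m x r) / ln r)%R) <= c%:E)%E.
Proof.
apply: limsup0_le_approx => e e0.
have [d d0 close] := pairing_chi_ln_close (1, 0) x e e0.
exists d => // r r0 rd; have := close r r0 rd.
by rewrite /= addr0 mul1r ler_norml => /andP[]; lra.
Qed.

Lemma chi_le_of_local_dim (x : T) (a : R) (q : R * R) : 0 <= q.1 + q.2 ->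
  (limsup0 (fun r => (ln (m x r) / ln r)%R) <= a%:E)%E ->
  (limsup0 (fun r => (pairing q (chi x r) / ln r)%R) <= ((q.1 + q.2) * a)%:E)%E.
Proof.
move=> s0 /(limsup0_scale _ _ _ s0); apply: limsup0_le_approx => e e0.
have [d d0 close] := pairing_chi_ln_close q x e e0.
exists d => // r r0 rd; have := close r r0 rd.
by rewrite ler_norml => /andP[]; lra.
Qed.

End ChiVersusMass.

Theorem proposition3 (R : realType) (L : set (seq bool)) (p0 p1 : R)
  (mu : {measure set (borelX R) -> \bar R})
  (chi : X -> R -> R * R) (a : R) (alpha : R * R) :
  0 < p0 -> p0 <= p1 -> p0 + p1 = 1 ->
  is_mu L p0 p1 mu ->
  (forall (q : R * R) (lam : R), 0 < lam ->
     exists2 r0 : R, 0 < r0 &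
       forall (x : X) (r : R), 0 < r -> r <= 1 -> r < r0 ->
         ((powR r lam * powR (fine (mu (ball_d x r))) (q.1 + q.2)
           <= expR (pairing q (chi x r)))%R
         /\ (expR (pairing q (chi x r))
           <= powR r (- lam) * powR (fine (mu (ball_d x r))) (q.1 + q.2))%R)) ->
  0 < a ->
  (forall q : R * R, pairing q alpha = a * (q.1 + q.2)) ->
  [set x : X | forall q : R * R, 0 <= q.1 + q.2 ->
     (limsup0 (fun r => (pairing q (chi x r) / ln r)%R) <= (pairing q alpha)%:E)%E]
  = [set x : X |
     (limsup0 (fun r => (ln (fine (mu (ball_d x r))) / ln r)%R) <= a%:E)%E].
Proof.
move=> _ _ _ _ chi_sandwich _ alphaE.
apply/seteqP; split => x /= dimx.
- have := dimx (1, 0); rewrite alphaE /= addr0 mulr1 => /(_ ler01).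
  exact: local_dim_le_of_chi chi_sandwich x a.
- move=> q s0; rewrite alphaE mulrC.
  exact: chi_le_of_local_dim chi_sandwich x a q s0 dimx.
Qed.
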